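(* Let $i\in\mathbb{N}$ be fixed and let $G\in\mathcal{G}_{k,n,p}$. For all $v,w\in V(G)$, \[ \mathbb{P}_w[X_i=v]=\frac{\mathcal{W}_i(w,v)}{\mathcal{W}_i(w)}\pm\mathcal{O}\!\left(\frac{\sqrt{\log n}}{p^{3/2}n^{3/2}}\right). \]
   Context: Fix an integer $k\ge2$ and let $p=p(n)$ satisfy $\frac{\log n}{n^{(k-1)/k}}\le p\le 1-\Omega(\frac{\log^4 n}{n})$. $\mathcal{G}_{k,n,p}$ denotes the set of graphs $G$ on $n$ vertices satisfying: (i) $G$ is not bipartite; (ii) $\operatorname{diam}(G)\le k$; (iii) every vertex has degree $d(v)=pn\pm\mathcal{O}(\sqrt{pn\log n})$; (iv) $2|E(G)|=pn^2\pm\mathcal{O}(\sqrt{pn^2\log n})$; (v) $|N(v)\cap N(w)|=p^2n\pm\mathcal{O}(\max\{\sqrt{p^2n\log n},\log n\})$ for all $v\ne w$; (vi) the unit eigenvector $\phi$ of the largest adjacency eigenvalue has entries $\phi_i=\frac1{\sqrt n}\pm\mathcal{O}(\frac{\log^{3/2}n}{\sqrt p\,n\log(pn)})$; (vii) $\lambda_1=(1+o(1))pn$; (viii) $\max\{|\lambda_2|,|\lambda_n|\}=\mathcal{O}(\sqrt{pn})$, where $\lambda_1\ge\dots\ge\lambda_n$ are the adjacency eigenvalues. Asymptotic notation is as $n\to\infty$ with constants independent of $n$. $X$ is a simple random walk on $G$ and $\mathbb{P}_w[\cdot]=\mathbb{P}[\cdot\mid X_0=w]$. $\mathcal{W}_i(w)$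 is the number of walks of length $i$ starting at $w$ and $\mathcal{W}_i(w,v)$ the number of walks of length $i$ from $w$ to $v$. *)

From HB Require Import structures.
From mathcomp Require Import all_boot all_order all_algebra.
From mathcomp Require Import all_classical all_reals all_analysis.
Set Implicit Arguments. Unset Strict Implicit. Unset Printing Implicit Defensive.
Import Order.TTheory GRing.Theory Num.Theory.
Local Open Scope ring_scope.

Definition simple_graph n (e : rel 'I_n) : Prop :=
  (forall x y, e x y = e y x) /\ (forall x, ~~ e x x).

Definition deg n (e : rel 'I_n) (v : 'I_n) : nat := #|[set u | e v u]|.

Definition codeg n (e : rel 'I_n) (v w : 'I_n) : nat :=
  #|[set u | e v u && e w u]|.

(* f : 'I_m.+1 -> 'I_n is a walk of length m: consecutive vertices adjacent *)
Definition is_walk n (e : rel 'I_n) (m : nat) (f : {ffun 'I_m.+1 -> 'I_n}) : bool :=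
  [forall j : 'I_m, e (f (widen_ord (leqnSn m) j)) (f (lift ord0 j))].

Definition walks_from n (e : rel 'I_n) (m : nat) (w : 'I_n) : {set {ffun 'I_m.+1 -> 'I_n}} :=
  [set f | is_walk e f && (f ord0 == w)].

Definition nwalks_from n (e : rel 'I_n) (m : nat) (w : 'I_n) : nat :=
  #|walks_from e m w|.

Definition nwalks n (e : rel 'I_n) (m : nat) (w v : 'I_n) : nat :=
  #|[set f in walks_from e m w | f ord_max == v]|.

(* P_w[X_m = v] for the simple random walk: sum over walks w -> v of length m
   of the product of the transition probabilities 1/d(x_j). *)
Definition walk_prob (R : realType) n (e : rel 'I_n) (m : nat) (w v : 'I_n) : R :=
  \sum_(f in walks_from e m w | f ord_max == v)
     \prod_(j < m) ((deg e (f (widen_ord (leqnSn m) j)))%:R)^-1.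

Definition bipartite n (e : rel 'I_n) : Prop :=
  exists c : 'I_n -> bool, forall x y, e x y -> c x != c y.

Definition dist_le n (e : rel 'I_n) (k : nat) (w v : 'I_n) : Prop :=
  exists m : nat, (m <= k)%N /\
    exists f : {ffun 'I_m.+1 -> 'I_n}, [/\ is_walk e f, f ord0 = w & f ord_max = v].

Definition diam_le n (e : rel 'I_n) (k : nat) : Prop :=
  forall v w, dist_le e k v w.

Definition adjmx (R : realType) n (e : rel 'I_n) : 'M[R]_n :=
  \matrix_(i, j) (e i j)%:R.

(* lam 0 >= lam 1 >= ... >= lam (n-1) are the eigenvalues of A with multiplicity
   (lambda_1, ..., lambda_n in the paper's notation). *)
Definition adj_spectrum (R : realType) n (e : rel 'I_n) (lam : nat -> R) : Prop :=
  (forall i j : nat, (i <= j < n)%N -> lam j <= lam i) /\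
  char_poly (adjmx R e) = \prod_(i < n) ('X - (lam i)%:P).

(* The class G_{k,n,p}, with explicit constants C3 C4 C5 C6 C8 for the O-terms
   of (iii),(iv),(v),(vi),(viii) and eps for the o(1) in (vii). *)
Definition in_class (R : realType) (k n : nat) (p : R)
    (C3 C4 C5 C6 C8 eps : R) (e : rel 'I_n) : Prop :=
  let nR := (n%:R : R) in
  let L := ln nR in
  [/\ simple_graph e, ~ bipartite e & diam_le e k] /\
  [/\
      (forall v, `|(deg e v)%:R - p * nR| <= C3 * Num.sqrt (p * nR * L)),
      `|(\sum_(v : 'I_n) deg e v)%:R - p * nR ^+ 2| <= C4 * Num.sqrt (p * nR ^+ 2 * L),
      (forall v w, v != w ->
         `|(codeg e v w)%:R - p ^+ 2 * nR| <= C5 * Num.max (Num.sqrt (p ^+ 2 * nR * L)) L)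
    & exists lam : nat -> R,
      [/\ adj_spectrum e lam,
          (exists phi : 'cV[R]_n,
             [/\ adjmx R e *m phi = lam 0%N *: phi,
                 \sum_(i < n) phi i ord0 ^+ 2 = 1
               & forall i, `|phi i ord0 - (Num.sqrt nR)^-1|
                     <= C6 * (L * Num.sqrt L / (Num.sqrt p * nR * ln (p * nR)))]),
          `|lam 0%N - p * nR| <= eps * (p * nR)
        & Num.max `|lam 1%N| `|lam n.-1| <= C8 * Num.sqrt (p * nR)]].

From HB Require Import structures.
From mathcomp Require Import all_boot all_order all_algebra.
From mathcomp Require Import all_classical all_reals all_analysis.
Import Order.TTheory GRing.Theory Num.Theory.
Import numFieldNormedType.Exports.
From mathcomp Require Import ring lra.

(* Only the degree condition (iii) matters.  A walk of length i from w is
   taken by the random walk with probability prod_j 1/d(x_j), which lies between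
   (pn + D)^-i and (pn - D)^-i for D = O(sqrt(pn log n)); the ratio
   W_i(w,v)/W_i(w) weights each walk by 1/W_i(w), which lies in the same window.
   Hence the two differ by at most W_i(w,v) ((pn - D)^-i - (pn + D)^-i), and as
   W_i(w,v) <= (pn + D)^(i-1) this is O(D/(pn)^2).  The lower bound on p
   guarantees D <= pn/2 for large n. *)

Set Implicit Arguments. Unset Strict Implicit. Unset Printing Implicit Defensive.
Local Open Scope ring_scope.

Section WalkCounting.
Variables (n : nat) (e : rel 'I_n).

Definition wcons m (w : 'I_n) (g : {ffun 'I_m.+1 -> 'I_n}) : {ffun 'I_m.+2 -> 'I_n} :=
  [ffun j => if unlift ord0 j is Some j' then g j' else w].

Definition wbehead m (f : {ffun 'I_m.+2 -> 'I_n}) : {ffun 'I_m.+1 -> 'I_n} :=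
  [ffun j => f (lift ord0 j)].

Lemma wcons0 m w (g : {ffun 'I_m.+1 -> 'I_n}) : wcons w g ord0 = w.
Proof. by rewrite ffunE unlift_none. Qed.

Lemma wcons_lift m w (g : {ffun 'I_m.+1 -> 'I_n}) j : wcons w g (lift ord0 j) = g j.
Proof. by rewrite ffunE liftK. Qed.

Lemma wcons_max m w (g : {ffun 'I_m.+1 -> 'I_n}) : wcons w g ord_max = g ord_max.
Proof.
have -> : (ord_max : 'I_m.+2) = lift ord0 ord_max by apply: val_inj.
exact: wcons_lift.
Qed.

Lemma wcons_inj m w : injective (@wcons m w).
Proof.
by move=> g1 g2 eq_g; apply/ffunP=> j; rewrite -(wcons_lift w g1) -(wcons_lift w g2) eq_g.
Qed.

Lemma wbeheadK m (f : {ffun 'I_m.+2 -> 'I_n}) : wcons (f ord0) (wbehead f) = f.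
Proof. by apply/ffunP=> j; rewrite ffunE; case: unliftP => [j'|] ->; rewrite ?ffunE. Qed.

Lemma is_walk_cons m w (g : {ffun 'I_m.+1 -> 'I_n}) :
  is_walk e (wcons w g) = e w (g ord0) && is_walk e g.
Proof.
have widen0 : widen_ord (leqnSn m.+1) ord0 = ord0 by apply: val_inj.
have widen_lift j : widen_ord (leqnSn m.+1) (lift ord0 j)
                    = lift ord0 (widen_ord (leqnSn m) j) by apply: val_inj.
apply/forallP/andP => [walk_wg | [e_wg /forallP walk_g] j].
  split; first by have := walk_wg ord0; rewrite widen0 wcons0 wcons_lift.
  by apply/forallP => j; have := walk_wg (lift ord0 j); rewrite widen_lift !wcons_lift.
case: (unliftP ord0 j) => [j'|] ->; first by rewrite widen_lift !wcons_lift.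
by rewrite widen0 wcons0 wcons_lift.
Qed.

Definition nwalks_into m (w : 'I_n) (P : pred 'I_n) : nat :=
  #|[set f in walks_from e m w | P (f ord_max)]|.

Lemma nwalks_fromE m w : nwalks_from e m w = nwalks_into m w xpredT.
Proof. by apply: eq_card => f; rewrite !inE andbT. Qed.

Lemma walks_from0 u : walks_from e 0 u = [set [ffun => u]].
Proof.
apply/setP => f; rewrite !inE.
have -> : is_walk e f by apply/forallP => -[].
apply/eqP/eqP => [f0u | ->]; last by rewrite ffunE.
by apply/ffunP => j; rewrite ffunE (ord1 j).
Qed.

Lemma nwalks_into0 u P : nwalks_into 0 u P = P u.
Proof.
rewrite /nwalks_into walks_from0.
have -> : [set f in [set [ffun => u]] | P (f ord_max)]
          = if P u then [set [ffun => u]] else finset.set0 :> {set {ffun 'I_1 -> 'I_n}}.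
  apply/setP => f; case Pu: (P u); rewrite !inE;
    by case: eqP => // ->; rewrite ffunE Pu.
by case: (P u); rewrite ?cards1 ?cards0.
Qed.

Lemma nwalks_intoS m w P :
  nwalks_into m.+1 w P = (\sum_(u in [set u | e w u]) nwalks_into m u P)%N.
Proof.
pose B := [set g : {ffun 'I_m.+1 -> 'I_n} |
             [&& is_walk e g, e w (g ord0) & P (g ord_max)]].
have -> : nwalks_into m.+1 w P = #|B|.
  rewrite /nwalks_into -(card_imset _ (@wcons_inj m w)); apply: eq_card => f.
  rewrite !inE; apply/idP/imsetP => [|[g]].
    case/andP=> /andP[walk_f /eqP f0] Pf; exists (wbehead f); last by rewrite -f0 wbeheadK.
    have f_eq : f = wcons w (wbehead f) by rewrite -f0 wbeheadK.
    move: walk_f Pf; rewrite inE {1}f_eq is_walk_cons => /andP[-> ->].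
    by rewrite {1}f_eq wcons_max.
  rewrite inE => /and3P[walk_g e_wg Pg] ->.
  by rewrite is_walk_cons wcons0 wcons_max e_wg walk_g Pg eqxx.
rewrite -[#|B|]sum1_card.
rewrite (partition_big (fun g : {ffun 'I_m.+1 -> 'I_n} => g ord0) (mem [set u | e w u])) /=;
  last by move=> g; rewrite !inE => /and3P[].
apply: eq_bigr => u; rewrite inE => e_wu; rewrite -[nwalks_into _ _ _]sum1_card.
apply: eq_bigl => g; rewrite !inE.
by case: (g ord0 =P u) => [->|_]; rewrite ?andbF // e_wu !andbT andbA.
Qed.

Lemma nwalksE m w v : nwalks e m w v = nwalks_into m w (pred1 v).
Proof. by []. Qed.

Lemma nwalks_into1_pred1_le w v : (nwalks_into 1 w (pred1 v) <= 1)%N.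
Proof.
rewrite nwalks_intoS; under eq_bigr do rewrite nwalks_into0.
rewrite big_mkcond (bigD1 v) //= big1 ?addn0; first by rewrite eqxx; case: ifP.
by move=> u /negbTE ->; rewrite if_same.
Qed.

Lemma nwalks_from_bounds (R : realDomainType) (lo hi : R) m w :
  0 <= lo -> (forall u, lo <= (deg e u)%:R <= hi) ->
  lo ^+ m <= (nwalks_from e m w)%:R <= hi ^+ m.
Proof.
move=> lo_ge0 deg_bd; rewrite nwalks_fromE; elim: m w => [|m IH] w.
  by rewrite nwalks_into0 !expr0 lexx.
have [lo_deg deg_hi] := andP (deg_bd w).
have hi_ge0 : 0 <= hi by rewrite (le_trans lo_ge0) ?(le_trans lo_deg).
rewrite nwalks_intoS natr_sum !exprS; apply/andP; split.
  apply: le_trans (ler_sum _ (fun u _ => proj1 (andP (IH u)))).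
  by rewrite sumr_const -mulr_natl ler_wpM2r ?exprn_ge0.
apply: le_trans (ler_sum _ (fun u _ => proj2 (andP (IH u)))) _.
by rewrite sumr_const -mulr_natl ler_wpM2r ?exprn_ge0.
Qed.

Lemma nwalksS_le (R : realDomainType) (hi : R) m w v :
  0 <= hi -> (forall u, (deg e u)%:R <= hi) -> (nwalks e m.+1 w v)%:R <= hi ^+ m.
Proof.
move=> hi_ge0 deg_hi; rewrite nwalksE; elim: m w => [|m IH] w.
  by rewrite expr0 lern1 nwalks_into1_pred1_le.
rewrite nwalks_intoS natr_sum exprS.
apply: le_trans (ler_sum _ (fun u _ => IH u)) _.
by rewrite sumr_const -mulr_natl ler_wpM2r ?exprn_ge0 ?deg_hi.
Qed.

Lemma dist_walk_prob_ratio_le (R : realType) (lo hi : R) m w v :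
  0 < lo -> (forall u, lo <= (deg e u)%:R <= hi) ->
  `|walk_prob R e m w v - (nwalks e m w v)%:R / (nwalks_from e m w)%:R|
    <= (nwalks e m w v)%:R * ((lo ^+ m)^-1 - (hi ^+ m)^-1).
Proof.
move=> lo_gt0 deg_bd.
have hi_gt0 : 0 < hi.
  by have /andP[lo_d d_hi] := deg_bd w; exact: lt_le_trans lo_gt0 (le_trans lo_d d_hi).
have inv_deg_bd u :
    (0 <= hi^-1 <= ((deg e u)%:R : R)^-1) && (0 <= ((deg e u)%:R : R)^-1 <= lo^-1).
  have /andP[lo_d d_hi] := deg_bd u.
  have d_gt0 : 0 < (deg e u)%:R :> R := lt_le_trans lo_gt0 lo_d.
  by rewrite !invr_ge0 !lef_pV2 ?posrE // lo_d d_hi ler0n (ltW hi_gt0).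
have prod_cst (x : R) : \prod_(j < m) x = x ^+ m by rewrite prodr_const card_ord.
have prod_bd (f : {ffun 'I_m.+1 -> 'I_n}) :
    (hi ^+ m)^-1 <= \prod_(j < m) ((deg e (f (widen_ord (leqnSn m) j)))%:R)^-1
                 <= (lo ^+ m)^-1.
  rewrite -!exprVn -!prod_cst; apply/andP; split; apply: ler_prod => j _;
    by case/andP: (inv_deg_bd (f (widen_ord (leqnSn m) j))).
have W_bd : (hi ^+ m)^-1 <= ((nwalks_from e m w)%:R)^-1 <= (lo ^+ m)^-1.
  have /andP[lo_W W_hi] := nwalks_from_bounds m w (ltW lo_gt0) deg_bd.
  have W_gt0 : 0 < (nwalks_from e m w)%:R :> R by apply: lt_le_trans lo_W; rewrite exprn_gt0.
  by rewrite !lef_pV2 ?posrE ?exprn_gt0 // lo_W W_hi.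
pose ends_at_v f := (f \in walks_from e m w) && (f ord_max == v).
rewrite /walk_prob /nwalks -(sum1dep_card ends_at_v) natr_sum !mulr_suml -sumrB.
apply: le_trans (ler_norm_sum _ _ _) (ler_sum _ _) => f _.
move: (prod_bd f) W_bd => /andP[? ?] /andP[? ?].
by rewrite mul1r ler_norml; apply/andP; split; lra.
Qed.

End WalkCounting.

Lemma subrX_le (R : realDomainType) (x y : R) m :
  0 <= x -> x <= y -> y ^+ m.+1 - x ^+ m.+1 <= m.+1%:R * y ^+ m * (y - x).
Proof.
move=> x_ge0 x_le_y; have y_ge0 := le_trans x_ge0 x_le_y.
rewrite subrXX mulrC ler_wpM2r ?subr_ge0 //.
have term_le (i : 'I_m.+1) : y ^+ (m.+1.-1 - i) * x ^+ i <= y ^+ m.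
  have -> : y ^+ m = y ^+ (m - i) * y ^+ i by rewrite -exprD subnK // -ltnS.
  by rewrite ler_wpM2l ?exprn_ge0 // lerXn2r ?nnegrE.
apply: le_trans (ler_sum _ (fun i _ => term_le i)) _.
by rewrite sumr_const card_ord mulr_natl.
Qed.

Lemma inv_powS_gap_le (R : realFieldType) (a d : R) m :
  0 < a -> 0 <= d -> 2 * d <= a ->
  (a + d) ^+ m * (((a - d) ^+ m.+1)^-1 - ((a + d) ^+ m.+1)^-1)
    <= 4 * m.+1%:R * 3 ^+ m * d / a ^+ 2.
Proof.
move=> a_gt0 d_ge0 two_d_le_a.
set x := a - d; set y := a + d.
have x_gt0 : 0 < x by rewrite /x; lra.
have y_gt0 : 0 < y by rewrite /y; lra.
have x_le_y : x <= y by rewrite /x /y; lra.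
have -> : y ^+ m * ((x ^+ m.+1)^-1 - (y ^+ m.+1)^-1)
          = (y ^+ m.+1 - x ^+ m.+1) / (x ^+ m.+1 * y).
  by rewrite !exprS; field; rewrite ?mulf_neq0 ?expf_neq0 ?gt_eqF.
have xy_inv_gt0 : 0 < (x ^+ m.+1 * y)^-1 by rewrite invr_gt0 mulr_gt0 ?exprn_gt0.
apply: le_trans (ler_wpM2r (ltW xy_inv_gt0) (subrX_le m (ltW x_gt0) x_le_y)) _.
have ym_le : y ^+ m <= 3 ^+ m * x ^+ m.
  have y_le_3x : y <= 3 * x by rewrite /x /y; lra.
  by rewrite -exprMn lerXn2r // nnegrE ?mulr_ge0 // ltW.
have step : m.+1%:R * y ^+ m * (y - x) <= m.+1%:R * (3 ^+ m * x ^+ m) * (y - x).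
  by rewrite ler_wpM2r ?ler_wpM2l ?subr_ge0.
apply: le_trans (ler_wpM2r (ltW xy_inv_gt0) step) _.
have -> : m.+1%:R * (3 ^+ m * x ^+ m) * (y - x) / (x ^+ m.+1 * y)
          = m.+1%:R * 3 ^+ m * d * (2 / (x * y)).
  by rewrite /x /y exprS; field; rewrite -/x -/y ?mulf_neq0 ?expf_neq0 ?gt_eqF.
have -> : 4 * m.+1%:R * 3 ^+ m * d / a ^+ 2 = m.+1%:R * 3 ^+ m * d * (4 / a ^+ 2).
  by field; rewrite gt_eqF.
rewrite ler_wpM2l ?mulr_ge0 ?exprn_ge0 //.
rewrite ler_pdivrMr ?mulr_gt0 // mulrAC ler_pdivlMr ?exprn_gt0 // /x /y; nra.
Qed.

Lemma dist_walk_prob_ratio_le_spread (R : realType) n (e : rel 'I_n) (a d : R) m w v :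
  0 < a -> 2 * d <= a -> (forall u, `|(deg e u)%:R - a| <= d) ->
  `|walk_prob R e m w v - (nwalks e m w v)%:R / (nwalks_from e m w)%:R|
    <= 4 * m%:R * 3 ^+ m.-1 * d / a ^+ 2.
Proof.
move=> a_gt0 two_d_le_a deg_near.
have d_ge0 : 0 <= d := le_trans (normr_ge0 _) (deg_near w).
have deg_bd u : a - d <= (deg e u)%:R <= a + d by rewrite -ler_distl.
have lo_gt0 : 0 < a - d by lra.
apply: le_trans (dist_walk_prob_ratio_le m w v lo_gt0 deg_bd) _.
case: m => [|m] /=; first by rewrite !expr0 invr1 subrr mulr0 mulr0 !mul0r.
have gap_ge0 : 0 <= ((a - d) ^+ m.+1)^-1 - ((a + d) ^+ m.+1)^-1.
  have hi_gt0 : 0 < a + d by lra.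
  by rewrite subr_ge0 lef_pV2 ?posrE ?exprn_gt0 // lerXn2r ?nnegrE //; lra.
have deg_hi u : (deg e u)%:R <= a + d by case/andP: (deg_bd u).
apply: le_trans (ler_wpM2r gap_ge0 (nwalksS_le m w v _ deg_hi)) _; first lra.
exact: inv_powS_gap_le.
Qed.

Lemma powR_inv_natXK (R : realType) (x : R) k :
  0 <= x -> (x `^ k.+1%:R^-1) ^+ k.+1 = x.
Proof. by move=> x_ge0; rewrite -powR_mulrn ?powR_ge0 // -powRrM mulVf ?powRr1. Qed.

Lemma ler_nat_powR_inv (R : realType) (K k n : nat) :
  (K ^ k.+1 <= n)%N -> K%:R <= (n%:R : R) `^ k.+1%:R^-1.
Proof.
move=> Kk_le_n; rewrite -(ler_pXn2r (ltn0Sn k)) ?nnegrE ?powR_ge0 //.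
by rewrite powR_inv_natXK // -natrX ler_nat.
Qed.

Lemma ler_mul_of_root_density (R : realType) (K k n : nat) (L q : R) :
  (0 < n)%N -> (K ^ k.+1 <= n)%N -> 0 <= L ->
  L / (n%:R `^ (k%:R / k.+1%:R)) <= q -> K%:R * L <= q * n%:R.
Proof.
move=> n_gt0 Kk_le_n L_ge0 density.
have n_gt0R : 0 < (n%:R : R) by rewrite ltr0n.
set t := (n%:R : R) `^ k.+1%:R^-1.
have t_gt0 : 0 < t by rewrite powR_gt0.
have t_k : (n%:R : R) `^ (k%:R / k.+1%:R) = t ^+ k.
  by rewrite mulrC powRrM powR_mulrn ?powR_ge0.
rewrite t_k in density.
have n_eq : (n%:R : R) = t ^+ k * t by rewrite -exprSr powR_inv_natXK ?ltW.
apply: le_trans (_ : t * L <= _).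
  by rewrite ler_wpM2r // ler_nat_powR_inv.
have -> : t * L = L / t ^+ k * n%:R by rewrite n_eq; field; rewrite expf_neq0 ?gt_eqF.
by rewrite ler_wpM2r.
Qed.

Lemma mul_sqrt_mul_le_half (R : rcfType) (a b L : R) :
  0 < a -> 0 <= b -> 0 <= L -> 4 * b ^+ 2 * L <= a -> 2 * (b * Num.sqrt (a * L)) <= a.
Proof.
move=> a_gt0 b_ge0 L_ge0 small.
rewrite -(ler_pXn2r (ltn0Sn 1)) ?nnegrE ?mulr_ge0 ?sqrtr_ge0 ?(ltW a_gt0) //.
have -> : (2 * (b * Num.sqrt (a * L))) ^+ 2 = 4 * b ^+ 2 * L * a.
  by rewrite !exprMn sqr_sqrtr ?mulr_ge0 ?(ltW a_gt0) //; ring.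
by rewrite expr2 ler_pM2r.
Qed.

Lemma sqrt_mul3_div_sqr (R : rcfType) (x y z : R) :
  0 < x -> 0 < y -> 0 <= z ->
  Num.sqrt (x * y * z) / (x * y) ^+ 2 = Num.sqrt z / (x * Num.sqrt x * (y * Num.sqrt y)).
Proof.
move=> x_gt0 y_gt0 z_ge0.
rewrite !sqrtrM ?mulr_ge0 ?(ltW x_gt0) ?(ltW y_gt0) //.
have := sqr_sqrtr (ltW x_gt0); have := sqr_sqrtr (ltW y_gt0).
have := sqrtr_gt0 x; have := sqrtr_gt0 y; rewrite x_gt0 y_gt0.
move: (Num.sqrt x) (Num.sqrt y) => sx sy sy_gt0 sx_gt0 <- <-.
by field; rewrite ?mulf_neq0 ?gt_eqF.
Qed.

Unset Implicit Arguments.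
Local Open Scope classical_set_scope.

Theorem proposition6p3 (R : realType) (k i : nat) (p : nat -> R)
    (c C3 C4 C5 C6 C8 : R) (eps : nat -> R) (N0 : nat) :
  (2 <= k)%N -> 0 < c ->
  eps @ \oo --> (0 : R) ->
  (forall n : nat, (N0 <= n)%N ->
     ln (n%:R : R) / (n%:R `^ ((k.-1)%:R / k%:R)) <= p n) ->
  (forall n : nat, (N0 <= n)%N ->
     p n <= 1 - c * (ln (n%:R : R) ^+ 4 / n%:R)) ->
  exists C : R, exists N : nat, forall n : nat, (N <= n)%N ->
    forall e : rel 'I_n, in_class k (p n) C3 C4 C5 C6 C8 (eps n) e ->
    forall v w : 'I_n,
      `|walk_prob R e i w v - (nwalks e i w v)%:R / (nwalks_from e i w)%:R|
        <= C * (Num.sqrt (ln (n%:R : R)) /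
                (p n * Num.sqrt (p n) * (n%:R * Num.sqrt n%:R))).
Proof.
case: k => [//|k] _ _ _ p_density _.
pose K := Num.bound (4 * C3 ^+ 2).
exists (4 * i%:R * 3 ^+ i.-1 * C3), (maxn (maxn N0 2) (K ^ k.+1)).
move=> n; rewrite !geq_max => /andP[/andP[n_ge_N0 n_ge2] n_ge_Kk].
move=> e [_ [deg_near _ _ _]] v w.
have n_gt0 : (0 < n)%N by rewrite (leq_trans _ n_ge2).
have L_gt0 : 0 < ln (n%:R : R) by rewrite ln_gt0 // ltr1n.
have K_gt : 4 * C3 ^+ 2 < K%:R by rewrite archi_boundP // mulr_ge0 ?sqr_ge0.
have pn_ge : K%:R * ln n%:R <= p n * n%:R.
  exact: ler_mul_of_root_density n_gt0 n_ge_Kk (ltW L_gt0) (p_density n n_ge_N0).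
have pn_gt0 : 0 < p n * n%:R.
  by apply: lt_le_trans pn_ge; rewrite mulr_gt0 // (le_lt_trans _ K_gt) ?mulr_ge0 ?sqr_ge0.
have p_gt0 : 0 < p n by move: pn_gt0; rewrite pmulr_lgt0 ?ltr0n.
have C3_ge0 : 0 <= C3.
  have := le_trans (normr_ge0 _) (deg_near w).
  by rewrite pmulr_lge0 // sqrtr_gt0 !mulr_gt0 ?ltr0n.
have spread_small : 4 * C3 ^+ 2 * ln n%:R <= p n * n%:R.
  by apply: le_trans pn_ge; rewrite ler_wpM2r ?ltW.
have := dist_walk_prob_ratio_le_spread i w v pn_gt0
  (mul_sqrt_mul_le_half pn_gt0 C3_ge0 (ltW L_gt0) spread_small) deg_near.
by rewrite [_ * (C3 * _)]mulrA -[_ * Num.sqrt _ / _]mulrA sqrt_mul3_div_sqr ?ltr0n ?(ltW L_gt0).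
Qed.
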